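(* For every set of formulas $\Gamma$ and every formula $\alpha$: if $\Gamma\vDash_{\mathcal{M}_1^1}\alpha$ then $\Gamma\vdash_{L_1^1}\alpha$.
   Context: Formulas are built from a countable set of propositional variables using unary $\neg,\circ$ and binary $\land,\lor,\to$; $\circ^0\alpha=\alpha$, $\circ^{m+1}\alpha=\circ(\circ^m\alpha)$. mbC is the Hilbert calculus with the axiom schemas of a standard axiomatization of positive classical propositional logic in $\land,\lor,\to$, plus (TND) $\alpha\lor\neg\alpha$ and (bc1) $\circ\alpha\to(\alpha\to(\neg\alpha\to\beta))$, with modus ponens as only rule; mbCciw is mbC plus (ciw) $\circ\alpha\lor(\alpha\land\neg\alpha)$; $L_1^0$ is mbCciw plus $\circ\circ\circ\alpha$; $L_1^1$ is $L_1^0$ plus (cf) $\neg\neg\alpha\to\alpha$ and (ce) $\alpha\to\neg\neg\alpha$. $\Gamma\vdash_L\alpha$ means derivability in $L$. Semantics: with Boolean operations $\land,\lor,\to,\sim$ on $\{0,1\}$, let $\mathbb{B}_1^0=\{x\in\{0,1\}^3: x_1\lor x_2=1,\ x_3\lor\sim(x_1\land x_2)=1\}$. The multialgebra $\mathcal{B}_1^1$ on $\mathbb{B}_1^0$ has $x\# y=\{z\in\mathbb{B}_1^0: z_1=x_1\# y_1\}$ for $\#\in\{\land,\lor,\to\}$, $\neg x=\{z\in\mathbb{B}_1^0: z_1=x_2 \text{ and } z_2=x_1\}$, $\circ x=\{(\sim(x_1\land x_2),x_3,x_3\land\sim(x_1\land x_2))\}$. $D_1^0=\{x:x_1=1\}$,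 $\mathcal{M}_1^1=(\mathcal{B}_1^1,D_1^0)$. Valuations over $\mathcal{M}_1^1$ are maps $h$ from formulas to $\mathbb{B}_1^0$ with $h(\alpha\#\beta)\in h(\alpha)\#h(\beta)$, $h(\neg\alpha)\in\neg h(\alpha)$, $h(\circ\alpha)\in\circ h(\alpha)$; $\Gamma\vDash_{\mathcal{M}_1^1}\alpha$ iff every valuation $h$ with $h[\Gamma]\subseteq D_1^0$ has $h(\alpha)\in D_1^0$. *)

From Stdlib Require Import Bool.

Inductive form : Type :=
| Var  : nat -> form
| Neg  : form -> form
| Circ : form -> form
| And  : form -> form -> form
| Or   : form -> form -> form
| Imp  : form -> form -> form.

Fixpoint circn (m : nat) (a : form) : form :=
  match m with 0 => a | S k => Circ (circn k a) end.

(* Axiom schemas of L_1^1.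
   Positive classical logic: the standard axiomatization used for mbC
   (Carnielli--Coniglio), Ax1--Ax9. *)
Inductive axiom_L11 : form -> Prop :=
| Ax1 a b     : axiom_L11 (Imp a (Imp b a))
| Ax2 a b c   : axiom_L11 (Imp (Imp a b) (Imp (Imp a (Imp b c)) (Imp a c)))
| Ax3 a b     : axiom_L11 (Imp a (Imp b (And a b)))
| Ax4 a b     : axiom_L11 (Imp (And a b) a)
| Ax5 a b     : axiom_L11 (Imp (And a b) b)
| Ax6 a b     : axiom_L11 (Imp a (Or a b))
| Ax7 a b     : axiom_L11 (Imp b (Or a b))
| Ax8 a b c   : axiom_L11 (Imp (Imp a c) (Imp (Imp b c) (Imp (Or a b) c)))
| Ax9 a b     : axiom_L11 (Or a (Imp a b))
| AxTND a     : axiom_L11 (Or a (Neg a))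
| AxBc1 a b   : axiom_L11 (Imp (Circ a) (Imp a (Imp (Neg a) b)))
| AxCiw a     : axiom_L11 (Or (Circ a) (And a (Neg a)))
| AxCirc3 a   : axiom_L11 (circn 3 a)
| AxCf a      : axiom_L11 (Imp (Neg (Neg a)) a)
| AxCe a      : axiom_L11 (Imp a (Neg (Neg a))).

Inductive derivable (Gamma : form -> Prop) : form -> Prop :=
| d_hyp a   : Gamma a -> derivable Gamma a
| d_ax a    : axiom_L11 a -> derivable Gamma a
| d_mp a b  : derivable Gamma a -> derivable Gamma (Imp a b) -> derivable Gamma b.

Definition val3 : Type := (bool * bool * bool)%type.
Definition c1 (x : val3) : bool := fst (fst x).
Definition c2 (x : val3) : bool := snd (fst x).
Definition c3 (x : val3) : bool := snd x.

Definition inB10 (x : val3) : Prop :=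
  c1 x || c2 x = true /\ c3 x || negb (c1 x && c2 x) = true.

(* Multioperations of B_1^1, as membership predicates "z \in x # y". *)
Definition m_and (x y z : val3) : Prop := inB10 z /\ c1 z = c1 x && c1 y.
Definition m_or  (x y z : val3) : Prop := inB10 z /\ c1 z = c1 x || c1 y.
Definition m_imp (x y z : val3) : Prop := inB10 z /\ c1 z = implb (c1 x) (c1 y).
Definition m_neg (x z : val3) : Prop := inB10 z /\ c1 z = c2 x /\ c2 z = c1 x.
Definition m_circ (x z : val3) : Prop :=
  z = (negb (c1 x && c2 x), c3 x, c3 x && negb (c1 x && c2 x)).

Definition designated (x : val3) : Prop := c1 x = true.

Definition valuation (h : form -> val3) : Prop :=
  (forall a, inB10 (h a)) /\
  (forall a b, m_and (h a) (h b) (h (And a b))) /\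
  (forall a b, m_or  (h a) (h b) (h (Or a b))) /\
  (forall a b, m_imp (h a) (h b) (h (Imp a b))) /\
  (forall a, m_neg (h a) (h (Neg a))) /\
  (forall a, m_circ (h a) (h (Circ a))).

Definition entails (Gamma : form -> Prop) (a : form) : Prop :=
  forall h, valuation h ->
    (forall g, Gamma g -> designated (h g)) -> designated (h a).

(** Lindenbaum–Asser argument.  If [Gamma] does not derive [alpha], extend
    [Gamma] to a set [D] that is maximal among the sets not deriving [alpha].
    Membership in [D] then commutes with [And], [Or], [Imp] and double
    negation, while TND, bc1, ciw and the axiom [circn 3] determine membership
    of [Circ beta] and [Neg (Circ (Circ beta))]; hence
    [beta |-> (beta \in D, ~beta \in D, ~o beta \in D)] is a valuation over
    M_1^1; it designates every member of [Gamma] but not [alpha]. *)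

From Stdlib Require Import Bool Classical ClassicalEpsilon Cantor PeanoNat.

Definition add_hyp (G : form -> Prop) (p : form) : form -> Prop :=
  fun x => G x \/ x = p.

Lemma derivable_mono (G G' : form -> Prop) a :
  (forall x, G x -> G' x) -> derivable G a -> derivable G' a.
Proof.
  intros HGG' H; induction H as [a Ha | a Ha | a b _ IHa _ IHab].
  - apply d_hyp, HGG', Ha.
  - apply d_ax, Ha.
  - exact (d_mp _ _ _ IHa IHab).
Qed.

Lemma derivable_imp_refl G p : derivable G (Imp p p).
Proof.
  eapply d_mp; [apply d_ax, (Ax1 p (Imp p p)) |].
  eapply d_mp; [apply d_ax, (Ax1 p p) |].
  apply d_ax, Ax2.
Qed.

Lemma deduction G p a : derivable (add_hyp G p) a -> derivable G (Imp p a).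
Proof.
  intros H; induction H as [a [Ha | ->] | a Ha | a b _ IHa _ IHab].
  - eapply d_mp; [apply d_hyp, Ha | apply d_ax, Ax1].
  - apply derivable_imp_refl.
  - eapply d_mp; [apply d_ax, Ha | apply d_ax, Ax1].
  - eapply d_mp; [exact IHab |].
    eapply d_mp; [exact IHa | apply d_ax, Ax2].
Qed.

Lemma derivable_union_chain (C : nat -> form -> Prop) a :
  (forall n m x, n <= m -> C n x -> C m x) ->
  derivable (fun x => exists n, C n x) a -> exists n, derivable (C n) a.
Proof.
  intros Cmono H; induction H as [a [n Ha] | a Ha | a b _ [n Ha] _ [m Hab]].
  - exists n; apply d_hyp, Ha.
  - exists 0; apply d_ax, Ha.
  - exists (n + m); eapply d_mp.
    + eapply derivable_mono; [| exact Ha].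
      intros x; apply Cmono, Nat.le_add_r.
    + eapply derivable_mono; [| exact Hab].
      intros x; apply Cmono; rewrite Nat.add_comm; apply Nat.le_add_r.
Qed.

Fixpoint form_code (a : form) : nat :=
  match a with
  | Var n => to_nat (0, n)
  | Neg a => to_nat (1, form_code a)
  | Circ a => to_nat (2, form_code a)
  | And a b => to_nat (3, to_nat (form_code a, form_code b))
  | Or a b => to_nat (4, to_nat (form_code a, form_code b))
  | Imp a b => to_nat (5, to_nat (form_code a, form_code b))
  end.

Lemma to_nat_inj x y u v : to_nat (x, y) = to_nat (u, v) -> x = u /\ y = v.
Proof.
  intros H; apply (f_equal of_nat) in H.
  rewrite !cancel_of_to in H; injection H; auto.
Qed.

Lemma form_code_inj a b : form_code a = form_code b -> a = b.
Proof.
  revert b; induction a; intros [] H; cbn [form_code] in H;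
    apply to_nat_inj in H; destruct H as [Htag Hargs]; try discriminate;
    try (apply to_nat_inj in Hargs; destruct Hargs as [Hl Hr]);
    f_equal; auto.
Qed.

Definition saturated (alpha : form) (D : form -> Prop) : Prop :=
  ~ derivable D alpha /\ forall p, ~ D p -> derivable (add_hyp D p) alpha.

Section Lindenbaum.

Variables (Gamma : form -> Prop) (alpha : form).

(* Stage [k] decides the formula with code [k]. *)
Fixpoint lindenbaum_chain (n : nat) : form -> Prop :=
  match n with
  | 0 => Gamma
  | S k => fun x => lindenbaum_chain k x \/
             (form_code x = k /\ ~ derivable (add_hyp (lindenbaum_chain k) x) alpha)
  end.

Definition lindenbaum : form -> Prop := fun x => exists n, lindenbaum_chain n x.

Lemma lindenbaum_chain_mono n m x :
  n <= m -> lindenbaum_chain n x -> lindenbaum_chain m x.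
Proof. induction 1; simpl; auto. Qed.

Hypothesis Gamma_alpha : ~ derivable Gamma alpha.

Lemma lindenbaum_chain_not_derivable n : ~ derivable (lindenbaum_chain n) alpha.
Proof.
  induction n as [| n IHn]; simpl; auto.
  destruct (classic (exists p, form_code p = n /\
                       ~ derivable (add_hyp (lindenbaum_chain n) p) alpha))
    as [[p [Hp Hnd]] | Hnone].
  - intros Hd; apply Hnd; revert Hd; apply derivable_mono.
    intros x [Hx | [Hx _]]; [left; exact Hx |].
    right; apply form_code_inj; congruence.
  - intros Hd; apply IHn; revert Hd; apply derivable_mono.
    intros x [Hx | Hx]; [exact Hx |].
    exfalso; apply Hnone; eauto.
Qed.

Lemma lindenbaum_saturated : saturated alpha lindenbaum.
Proof.
  split.
  - intros Hd.
    destruct (derivable_union_chain _ _ lindenbaum_chain_mono Hd) as [n Hn].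
    exact (lindenbaum_chain_not_derivable n Hn).
  - intros p Hp; apply NNPP; intros Hnd; apply Hp.
    exists (S (form_code p)); right; split; [reflexivity |].
    intros Hd; apply Hnd; revert Hd; apply derivable_mono.
    intros x [Hx | Hx]; [left; exists (form_code p); exact Hx | right; exact Hx].
Qed.

Lemma lindenbaum_extends x : Gamma x -> lindenbaum x.
Proof. intros Hx; exists 0; exact Hx. Qed.

End Lindenbaum.

Section Saturated.

Variables (alpha : form) (D : form -> Prop).
Hypothesis D_sat : saturated alpha D.

Lemma sat_not_alpha : ~ D alpha.
Proof. intros H; apply (proj1 D_sat), d_hyp, H. Qed.

Lemma sat_closed p : derivable D p -> D p.
Proof.
  intros Hp; apply NNPP; intros Hn.
  apply (proj1 D_sat); eapply d_mp; [exact Hp |].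
  apply deduction, (proj2 D_sat), Hn.
Qed.

Lemma sat_refutes p : ~ D p -> derivable D (Imp p alpha).
Proof. intros Hn; apply deduction, (proj2 D_sat), Hn. Qed.

Lemma sat_axiom a : axiom_L11 a -> D a.
Proof. intros Ha; apply sat_closed, d_ax, Ha. Qed.

Lemma sat_mp a b : D a -> D (Imp a b) -> D b.
Proof. intros Ha Hab; apply sat_closed; exact (d_mp _ _ _ (d_hyp _ _ Ha) (d_hyp _ _ Hab)). Qed.

Lemma sat_and a b : D (And a b) <-> D a /\ D b.
Proof.
  split.
  - intros H; split; eapply sat_mp; eauto using sat_axiom, Ax4, Ax5.
  - intros [Ha Hb]; eapply sat_mp; [exact Hb |].
    eapply sat_mp; [exact Ha | apply sat_axiom, Ax3].
Qed.

Lemma sat_or a b : D (Or a b) <-> D a \/ D b.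
Proof.
  split.
  - intros H; apply NNPP; intros Hn.
    apply (proj1 D_sat).
    assert (Na : derivable D (Imp a alpha)) by (apply sat_refutes; tauto).
    assert (Nb : derivable D (Imp b alpha)) by (apply sat_refutes; tauto).
    eapply d_mp; [apply d_hyp, H |].
    eapply d_mp; [exact Nb |].
    eapply d_mp; [exact Na | apply d_ax, Ax8].
  - intros [H | H]; eapply sat_mp; eauto using sat_axiom, Ax6, Ax7.
Qed.

Lemma sat_imp a b : D (Imp a b) <-> (D a -> D b).
Proof.
  split.
  - intros H Ha; eapply sat_mp; eauto.
  - intros H; destruct (proj1 (sat_or a (Imp a b)) (sat_axiom _ (Ax9 a b)));
      [eapply sat_mp; [apply H; assumption | apply sat_axiom, Ax1] | assumption].
Qed.

Lemma sat_tnd a : D a \/ D (Neg a).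
Proof. apply sat_or, sat_axiom, AxTND. Qed.

Lemma sat_neg_neg a : D (Neg (Neg a)) <-> D a.
Proof. split; intros; eapply sat_mp; eauto using sat_axiom, AxCf, AxCe. Qed.

Lemma sat_circ a : D (Circ a) <-> ~ (D a /\ D (Neg a)).
Proof.
  split.
  - intros Hc [Ha Hna]; apply sat_not_alpha.
    eapply sat_mp; [exact Hna |]. eapply sat_mp; [exact Ha |].
    eapply sat_mp; [exact Hc | apply sat_axiom, AxBc1].
  - intros Hn; destruct (proj1 (sat_or _ _) (sat_axiom _ (AxCiw a))) as [Hc | Hb];
      [exact Hc | rewrite sat_and in Hb; tauto].
Qed.

(* [circn 3 a] makes [Circ (Circ a)] consistent, which determines [Neg (Circ (Circ a))]. *)
Lemma sat_neg_circ_circ a :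
  D (Neg (Circ (Circ a))) <-> D (Neg (Circ a)) /\ ~ (D a /\ D (Neg a)).
Proof.
  pose proof (proj1 (sat_circ _) (sat_axiom _ (AxCirc3 a))) as Hcc.
  pose proof (sat_tnd (Circ (Circ a))).
  pose proof (sat_circ (Circ a)).
  pose proof (sat_circ a).
  tauto.
Qed.

End Saturated.

Definition truth (P : Prop) : bool :=
  if excluded_middle_informative P then true else false.

Lemma truth_true P : truth P = true <-> P.
Proof. unfold truth; destruct excluded_middle_informative; split; auto; discriminate. Qed.

Lemma truth_iff P Q : (P <-> Q) -> truth P = truth Q.
Proof. unfold truth; do 2 destruct excluded_middle_informative; tauto. Qed.

Lemma truth_and P Q : truth (P /\ Q) = truth P && truth Q.
Proof. unfold truth; repeat destruct excluded_middle_informative; simpl; tauto. Qed.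

Lemma truth_or P Q : truth (P \/ Q) = truth P || truth Q.
Proof. unfold truth; repeat destruct excluded_middle_informative; simpl; tauto. Qed.

Lemma truth_imp P Q : truth (P -> Q) = implb (truth P) (truth Q).
Proof. unfold truth; repeat destruct excluded_middle_informative; simpl; tauto. Qed.

Lemma truth_not P : truth (~ P) = negb (truth P).
Proof. unfold truth; repeat destruct excluded_middle_informative; simpl; tauto. Qed.

Definition canonical_valuation (D : form -> Prop) (a : form) : val3 :=
  (truth (D a), truth (D (Neg a)), truth (D (Neg (Circ a)))).

Section CanonicalValuation.

Variables (alpha : form) (D : form -> Prop).
Hypothesis D_sat : saturated alpha D.

Let h := canonical_valuation D.

Lemma canonical_valuation_inB10 a : inB10 (h a).
Proof.
  unfold inB10, h, canonical_valuation, c1, c2, c3; simpl; split.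
  - rewrite <- truth_or; apply truth_true, (sat_tnd _ _ D_sat).
  - rewrite <- truth_and, <- truth_not, <- truth_or; apply truth_true.
    destruct (sat_tnd _ _ D_sat (Circ a)) as [Hc | Hnc]; [right | left; exact Hnc].
    exact (proj1 (sat_circ _ _ D_sat a) Hc).
Qed.

Lemma canonical_valuation_circ a : m_circ (h a) (h (Circ a)).
Proof.
  unfold m_circ, h, canonical_valuation, c1, c2, c3; simpl.
  rewrite <- truth_and, <- truth_not, <- truth_and.
  f_equal; [f_equal |]; apply truth_iff.
  - apply (sat_circ _ _ D_sat).
  - apply (sat_neg_circ_circ _ _ D_sat).
Qed.

Lemma canonical_valuation_valuation : valuation h.
Proof.
  unfold valuation, m_and, m_or, m_imp, m_neg.
  repeat split; intros; try apply canonical_valuation_inB10;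
    try apply canonical_valuation_circ;
    unfold h, canonical_valuation, c1, c2; simpl.
  - rewrite <- truth_and; apply truth_iff, (sat_and _ _ D_sat).
  - rewrite <- truth_or; apply truth_iff, (sat_or _ _ D_sat).
  - rewrite <- truth_imp; apply truth_iff, (sat_imp _ _ D_sat).
  - apply truth_iff, (sat_neg_neg _ _ D_sat).
Qed.

Lemma canonical_valuation_designated a : designated (h a) <-> D a.
Proof. apply truth_true. Qed.

End CanonicalValuation.

Theorem theorem9 (Gamma : form -> Prop) (alpha : form) :
  entails Gamma alpha -> derivable Gamma alpha.
Proof.
  intros Hent; apply NNPP; intros Hnd.
  pose proof (lindenbaum_saturated Gamma alpha Hnd) as Hsat.
  apply (sat_not_alpha _ _ Hsat), (canonical_valuation_designated (lindenbaum Gamma alpha)).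
  apply Hent; [exact (canonical_valuation_valuation _ _ Hsat) |].
  intros g Hg; apply canonical_valuation_designated, lindenbaum_extends, Hg.
Qed.
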